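(* Let $m_1,\dots,m_r,n$ be positive integers with $m=\sum_{i=1}^r m_i\le n$. Suppose that $\sum_{i=1}^r\lfloor m_i n/(m+1)\rfloor<\lfloor mn/(m+1)\rfloor$, or that there is some $i\in[r]$ with $m_i n/(m+1)<\lceil m_i n/(m+2)\rceil$. Then $(m+1)\nmid n$, and neither $K_{m_1 n,\dots,m_r n}$ nor $K_{m_1,\dots,m_r}\times K_n$ is equitably $\lfloor mn/(m+1)\rfloor$-colorable.
   Context: A (proper) $k$-coloring of a graph $G$ is a map $f:V(G)\to\{1,\dots,k\}$ with $f(x)\ne f(y)$ whenever $xy\in E(G)$; an equitable $k$-coloring is a $k$-coloring in which any two color classes differ in size by at most $1$; $G$ is equitably $k$-colorable if it has one. $K_{a_1,\dots,a_r}$ denotes the complete multipartite graph with parts of sizes $a_1,\dots,a_r$; $K_n$ is the complete graph on $n$ vertices. The Kronecker product $G\times H$ has vertex set $V(G)\times V(H)$, with $(x,y)$ adjacent to $(x',y')$ iff $xx'\in E(G)$ and $yy'\in E(H)$. $[r]=\{1,\dots,r\}$. *)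

From mathcomp Require Import all_boot all_order.
Set Implicit Arguments. Unset Strict Implicit. Unset Printing Implicit Defensive.

Definition proper_coloring (V : finType) (e : rel V) (k : nat) (f : V -> 'I_k) : Prop :=
  forall x y : V, e x y -> f x != f y.

Definition equitable_coloring (V : finType) (e : rel V) (k : nat) (f : V -> 'I_k) : Prop :=
  proper_coloring e f /\
  forall c c' : 'I_k, #|[pred x | f x == c]| <= #|[pred x | f x == c']| + 1.

Definition equitably_colorable (V : finType) (e : rel V) (k : nat) : Prop :=
  exists f : V -> 'I_k, equitable_coloring e f.

(* Complete multipartite graph K_{a_1,...,a_r}: vertices are pairs (i, j) with
   j < a i (part i has a i vertices); adjacent iff in different parts. *)
Definition multipartite_vertex (r : nat) (a : 'I_r -> nat) : finType :=
  {i : 'I_r & 'I_(a i)}.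
Definition Kmultipartite (r : nat) (a : 'I_r -> nat) : rel (multipartite_vertex a) :=
  fun x y => tag x != tag y.

Definition Kcomplete (n : nat) : rel 'I_n := fun x y => x != y.

Definition kron (V W : finType) (e : rel V) (g : rel W) : rel (V * W)%type :=
  fun p q => e p.1 q.1 && g p.2 q.2.

Definition ceildiv (a b : nat) : nat := (a + b.-1) %/ b.
Arguments Kmultipartite {r} a _ _.
Arguments Kcomplete : clear implicits.

From mathcomp Require Import all_boot all_order.
From mathcomp Require Import zify.

Set Implicit Arguments.
Unset Strict Implicit.
Unset Printing Implicit Defensive.

(* Let m = m_1 + ... + m_r <= n and k = floor(mn/(m+1)).  Both graphs have mn
   vertices split into r parts of sizes m_i n, so an equitable k-colouring has
   all classes of size at least m+1 (otherwise fewer than k(m+1) <= mn vertices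
   are coloured).  In both graphs an independent set with more than m vertices
   lies inside one part (for the Kronecker product, an independent set meeting
   two parts lies in a column {(x, t)}, which has only m vertices), so every
   part i is a union of c_i whole classes, with sum_i c_i = k.
   - c_i (m+1) <= m_i n gives k <= sum_i floor(m_i n/(m+1));
   - if m_i n < (m+1) ceil(m_i n/(m+2)) then c_i (m+2) < m_i n, so part i has a
     class of size >= m+3; by equitability all classes have size >= m+2 and
     summing gives k(m+2) < mn, which is arithmetically impossible. *)

Definition class_size (V : finType) (k : nat) (f : V -> 'I_k) (c : 'I_k) : nat :=
  #|[pred x | f x == c]|.

Definition balanced (I : finType) (w : I -> nat) : Prop :=
  forall c c', w c <= w c' + 1.

Lemma ltn_ceildiv a b c : 0 < b -> (c < ceildiv a b) = (c * b < a).
Proof.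
case: b => // b _; rewrite /ceildiv -[c < _]/(c.+1 <= _) leq_divRL // mulSn.
by apply/idP/idP; lia.
Qed.

(* The arithmetic core of the second condition: for 0 < m <= n and
   k = floor(mn/(m+1)) > 0 one always has mn <= k(m+2).  Writing
   mn = k(m+1) + rem, the converse forces k < rem <= m, while m <= n gives
   k >= m-1; hence mn = m^2 + m - 1, which needs m = n = 1 and then k = 0. *)
Lemma floor_div_succ_bound m n :
  0 < m -> m <= n -> 0 < m * n %/ m.+1 -> m * n <= m * n %/ m.+1 * m.+2.
Proof.
move=> m_gt0 le_mn; have := divn_eq (m * n) m.+1; have := ltn_pmod (m * n) (ltn0Sn m).
move: (m * n %/ m.+1) (m * n %% m.+1) => k rem lt_rem def_mn k_gt0.
rewrite leqNgt; apply/negP => lt_mn.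
have lt_k_rem : k < rem by nia.
have def_m : k.+1 = m by nia.
by case: (ltngtP n m) => [||eq_nm]; [lia|nia|subst; nia].
Qed.

Lemma ltn_sum_at (I : finType) (F G : I -> nat) (i0 : I) :
  (forall i, F i <= G i) -> F i0 < G i0 -> \sum_i F i < \sum_i G i.
Proof.
move=> le_FG lt_FG; rewrite (bigD1 i0) //= [X in _ < X](bigD1 i0) //=.
by rewrite -addSn leq_add // leq_sum.
Qed.

Lemma card_fibres (V : finType) (r : nat) (p : V -> 'I_r) :
  #|V| = \sum_(i < r) #|[pred x | p x == i]|.
Proof.
rewrite -sum1_card (partition_big p predT) //=; apply: eq_bigr => i _.
by rewrite -sum1_card.
Qed.

Lemma balanced_sum_bound (I : finType) (w : I -> nat) (P : {pred I}) (c : I) :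
  balanced w -> \sum_(d in P) w d + (c \in P) <= #|P| * (w c).+1.
Proof.
move=> bal; have sum_eq_c : \sum_(d in P) (d == c) = (c \in P).
  case: (boolP (c \in P)) => cP.
    by rewrite (bigD1 c) //= eqxx big1 // => d /andP[_ /negbTE ->].
  by rewrite big1 // => d dP; case: eqP => // eq_dc; rewrite -eq_dc dP in cP.
rewrite -sum_eq_c -big_split -sum_nat_const /=; apply: leq_sum => d _.
by case: eqP => [->|_]; rewrite ?addn1 // addn0 -addn1 bal.
Qed.

Lemma balanced_classes_gt (V : finType) (k b : nat) (f : V -> 'I_k) :
  balanced (class_size f) -> k * b.+1 <= #|V| -> forall c, b < class_size f c.
Proof.
move=> bal large c; rewrite ltnNge; apply/negP => small.
have := balanced_sum_bound [pred : 'I_k | true] c bal.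
rewrite inE addn1 card_ord -(card_fibres f) => lt_V.
have : k * (class_size f c).+1 <= k * b.+1 by rewrite leq_mul2l ltnS small orbT.
lia.
Qed.

Definition coloring_obstruction (r : nat) (mi : 'I_r -> nat) (n : nat) : Prop :=
  let m := \sum_(i < r) mi i in
  \sum_(i < r) (mi i * n) %/ m.+1 < (m * n) %/ m.+1 \/
  exists i : 'I_r, mi i * n < m.+1 * ceildiv (mi i * n) m.+2.

(* Either condition forces m > 0 (the second because ceil(x/2) <= x). *)
Lemma obstruction_sum_gt0 r (mi : 'I_r -> nat) n :
  coloring_obstruction mi n -> 0 < \sum_(i < r) mi i.
Proof.
move=> obs; rewrite lt0n; apply/negP => /eqP m0; move: obs.
rewrite /coloring_obstruction /= m0 mul0n div0n.
by case=> [//|[i]]; rewrite mul1n ltn_ceildiv //; lia.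
Qed.

(* When m+1 divides n all the divisions in the conditions are exact. *)
Lemma divisible_no_obstruction r (mi : 'I_r -> nat) n :
  (\sum_(i < r) mi i).+1 %| n -> ~ coloring_obstruction mi n.
Proof.
rewrite /coloring_obstruction; set m := \sum_(i < r) mi i.
case/dvdnP=> t ->; case=> [|[i]].
  rewrite mulnA mulnK //; under eq_bigr => i _ do rewrite mulnA mulnK //.
  by rewrite -big_distrl /= -/m ltnn.
have : ceildiv (mi i * (t * m.+1)) m.+2 <= mi i * t.
  by rewrite leqNgt ltn_ceildiv //; nia.
nia.
Qed.

Section RefinedColoring.

Variables (V : finType) (r k : nat) (p : V -> 'I_r) (f : V -> 'I_k).
Variable default_part : 'I_r.

Definition color_part (c : 'I_k) : 'I_r :=
  if [pick x | f x == c] is Some x then p x else default_part.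

Definition part_colors (i : 'I_r) : {pred 'I_k} := [pred c | color_part c == i].

Lemma sum_card_part_colors : \sum_(i < r) #|part_colors i| = k.
Proof. by rewrite -[RHS]card_ord (card_fibres color_part). Qed.

Hypothesis f_refines_p : forall x y, f x = f y -> p x = p y.

Lemma color_partE x : color_part (f x) = p x.
Proof.
rewrite /color_part; case: pickP => [y /eqP fy | /(_ x)]; last by rewrite eqxx.
exact: f_refines_p.
Qed.

Lemma card_part_classes i :
  #|[pred x | p x == i]| = \sum_(c in part_colors i) class_size f c.
Proof.
rewrite -sum1_card (partition_big f (fun c => c \in part_colors i)) => [|x]; last first.
  by rewrite !inE color_partE.
apply: eq_bigr => c; rewrite inE => /eqP part_c; rewrite /class_size -sum1_card.
apply: eq_bigl => x; rewrite !inE; case: (f x =P c) => [fx|]; last by rewrite andbF.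
by rewrite andbT -color_partE fx part_c eqxx.
Qed.

Lemma part_colors_lower i s :
  (forall c, s <= class_size f c) -> #|part_colors i| * s <= #|[pred x | p x == i]|.
Proof. by move=> large; rewrite card_part_classes -sum_nat_const leq_sum. Qed.

Lemma part_colors_upper i c : balanced (class_size f) ->
  #|[pred x | p x == i]| <= #|part_colors i| * (class_size f c).+1.
Proof.
move=> bal; rewrite card_part_classes.
exact: leq_trans (leq_addr _ _) (balanced_sum_bound _ c bal).
Qed.

Variables (m n : nat) (mi : 'I_r -> nat).
Hypothesis part_size : forall i, #|[pred x | p x == i]| = mi i * n.
Hypothesis classes_gt : forall c, m < class_size f c.

(* Part i holds at most floor(m_i n/(m+1)) colours, whence the first bound. *)
Lemma colors_le_sum_floor : k <= \sum_(i < r) (mi i * n) %/ m.+1.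
Proof.
rewrite -sum_card_part_colors; apply: leq_sum => i _.
by rewrite leq_divRL // -part_size part_colors_lower.
Qed.

Hypotheses (m_def : m = \sum_(i < r) mi i) (m_gt0 : 0 < m) (le_mn : m <= n).
Hypotheses (k_def : k = m * n %/ m.+1) (f_balanced : balanced (class_size f)).

(* If (m+1) ceil(m_i n/(m+2)) > m_i n, part i holds fewer than m_i n/(m+2)
   colours, so one of its classes, hence every class, has more than m+1
   vertices; summing over all parts gives k(m+2) < mn, which is impossible. *)
Lemma ceil_condition_fails i : m.+1 * ceildiv (mi i * n) m.+2 <= mi i * n.
Proof.
rewrite leqNgt; apply/negP => lt_part.
have few_colors : #|part_colors i| * m.+2 < mi i * n.
  rewrite -ltn_ceildiv // -(ltn_pmul2l (ltn0Sn m)) mulnC.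
  by apply: leq_ltn_trans lt_part; rewrite -part_size part_colors_lower.
have classes_gt1 c : m.+1 < class_size f c.
  rewrite ltnNge; apply/negP => small.
  have := part_colors_upper i c f_balanced; rewrite part_size.
  have : #|part_colors i| * (class_size f c).+1 <= #|part_colors i| * m.+2.
    by rewrite leq_mul2l ltnS small orbT.
  lia.
have k_gt0 : 0 < k.
  have : 0 < #|[pred x | p x == i]| by rewrite part_size; lia.
  by case/card_gt0P => x _; apply: leq_ltn_trans (ltn_ord (f x)).
have le_parts j : #|part_colors j| * m.+2 <= mi j * n.
  by rewrite -part_size part_colors_lower.
have := ltn_sum_at le_parts few_colors.
rewrite -!big_distrl /= sum_card_part_colors -m_def.
have := floor_div_succ_bound m_gt0 le_mn; rewrite -k_def => /(_ k_gt0).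
lia.
Qed.

End RefinedColoring.

Lemma equitable_refining_no_obstruction (V : finType) (r k n : nat)
    (mi : 'I_r -> nat) (p : V -> 'I_r) (f : V -> 'I_k) :
  let m := \sum_(i < r) mi i in
  0 < m -> m <= n -> k = m * n %/ m.+1 ->
  (forall i, #|[pred x | p x == i]| = mi i * n) -> balanced (class_size f) ->
  ((forall c, m < class_size f c) -> forall x y, f x = f y -> p x = p y) ->
  ~ coloring_obstruction mi n.
Proof.
move=> m m_gt0 le_mn k_def part_size f_balanced large_refines.
have card_V : #|V| = m * n.
  by rewrite (card_fibres p) /m big_distrl; apply: eq_bigr => i _; rewrite part_size.
have classes_gt : forall c, m < class_size f c.
  by apply: balanced_classes_gt f_balanced _; rewrite card_V k_def leq_divM.
have f_refines_p := large_refines classes_gt.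
have : 0 < #|V| by rewrite card_V muln_gt0 m_gt0 (leq_trans m_gt0 le_mn).
case/card_gt0P => x0 _; case=> [|[i]]; apply/negP; rewrite -leqNgt -/m.
  by rewrite -k_def (colors_le_sum_floor (p x0) f_refines_p part_size classes_gt).
exact: (ceil_condition_fails (p x0) f_refines_p part_size classes_gt erefl
  m_gt0 le_mn k_def f_balanced).
Qed.

Lemma card_multipartite_part r (a : 'I_r -> nat) i :
  #|[pred x : multipartite_vertex a | tag x == i]| = a i.
Proof.
rewrite -[RHS]card_ord -(@card_image _ _ (@Tagged _ i (fun i => 'I_(a i)))); last first.
  by move=> j1 j2 /(congr1 (tagged_as (Tagged (fun i => 'I_(a i)) j1))); rewrite !tagged_asE.
apply: eq_card => -[i' j]; rewrite inE.
by apply/eqP/imageP => [/= <-|[y _ ->]]; [exists j|].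
Qed.

Lemma card_kron_part r (a : 'I_r -> nat) n i :
  #|[pred x : multipartite_vertex a * 'I_n | tag x.1 == i]| = a i * n.
Proof.
rewrite -(card_multipartite_part a i) -[in RHS](card_ord n) -cardX.
by apply: eq_card => x; rewrite !inE andbT.
Qed.

Lemma card_kron_column r (a : 'I_r -> nat) n t :
  #|[pred x : multipartite_vertex a * 'I_n | x.2 == t]| = \sum_(i < r) a i.
Proof.
rewrite -[RHS]muln1 -(card1 t) (eq_bigr _ (fun i _ => esym (card_multipartite_part a i))).
rewrite -(card_fibres tag) -cardX; apply: eq_card => x; by rewrite !inE.
Qed.

Lemma multipartite_coloring_refines r (a : 'I_r -> nat) k
    (f : multipartite_vertex a -> 'I_k) :
  proper_coloring (Kmultipartite a) f -> forall x y, f x = f y -> tag x = tag y.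
Proof. by move=> proper x y fxy; apply/eqP/negPn/negP => /proper; rewrite fxy eqxx. Qed.

Lemma kron_same_color r (a : 'I_r -> nat) n k
    (f : multipartite_vertex a * 'I_n -> 'I_k) :
  proper_coloring (kron (Kmultipartite a) (Kcomplete n)) f ->
  forall z z', f z = f z' -> tag z.1 = tag z'.1 \/ z.2 = z'.2.
Proof.
move=> proper z z' fzz'; case: (eqVneq (tag z.1) (tag z'.1)) => [|parts]; first by left.
right; apply/eqP/negPn/negP => cols.
by have := proper z z'; rewrite /kron /Kmultipartite /Kcomplete /= parts cols fzz' eqxx => /(_ isT).
Qed.

(* A colour class of K_{a_1,...,a_r} x K_n meeting two parts lies in a column,
   which has only a_1 + ... + a_r vertices; so larger classes lie in a part. *)
Lemma kron_large_classes_refine r (a : 'I_r -> nat) n k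
    (f : multipartite_vertex a * 'I_n -> 'I_k) :
  proper_coloring (kron (Kmultipartite a) (Kcomplete n)) f ->
  (forall c, \sum_(i < r) a i < class_size f c) ->
  forall x y, f x = f y -> tag x.1 = tag y.1.
Proof.
move=> proper large x y fxy; apply/eqP/negPn/negP => parts_xy.
have col_xy : x.2 = y.2.
  by case: (kron_same_color proper fxy) => // e; rewrite e eqxx in parts_xy.
have class_in_column : [pred z | f z == f x] \subset [pred z | z.2 == x.2].
  apply/subsetP => z; rewrite !inE => /eqP fz.
  case: (kron_same_color proper fz) => [part_zx|->//].
  case: (kron_same_color proper (etrans fz fxy)) => [part_zy|->]; last by rewrite col_xy.
  by rewrite -part_zx part_zy eqxx in parts_xy.
have := subset_leq_card class_in_column; rewrite card_kron_column.
by move/(leq_trans (large (f x))); rewrite ltnn.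
Qed.

Theorem mainTheorem5 (r : nat) (mi : 'I_r -> nat) (n : nat) :
  (forall i, 0 < mi i) -> 0 < n ->
  let m := \sum_(i < r) mi i in
  m <= n ->
  (\sum_(i < r) (mi i * n) %/ m.+1 < (m * n) %/ m.+1 \/
   exists i : 'I_r, mi i * n < m.+1 * ceildiv (mi i * n) m.+2) ->
  ~~ (m.+1 %| n) /\
  ~ equitably_colorable (Kmultipartite (fun i => mi i * n)) ((m * n) %/ m.+1) /\
  ~ equitably_colorable (kron (Kmultipartite mi) (Kcomplete n)) ((m * n) %/ m.+1).
Proof.
move=> _ _ m le_mn obstruction.
have m_gt0 : 0 < m := obstruction_sum_gt0 obstruction.
split; first by apply/negP => /divisible_no_obstruction; apply.
split; case=> f [proper f_balanced].
  apply: (equitable_refining_no_obstruction (p := tag) m_gt0 le_mn erefl _ f_balanced _ obstruction).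
    by move=> i; rewrite card_multipartite_part.
  by move=> _; apply: multipartite_coloring_refines.
apply: (equitable_refining_no_obstruction (p := fun x => tag x.1) m_gt0 le_mn erefl _ f_balanced _ obstruction).
  by move=> i; rewrite card_kron_part.
exact: kron_large_classes_refine.
Qed.
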